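(* Let $k\ge2$ and let $B=M\cup\{\omega\}$ where $\omega\in P_k\setminus M$ has $q\ge 1$ arguments. Let $s,m,n\ge 1$, and for each $i=1,\ldots,s$ let $F_i=\{f_{i1},\ldots,f_{im}\}$ be a system of $m$ functions from $P_k(n)$. Then there exist functions $g_1,\ldots,g_m\in P_k(s+n)$ such that for every $j=1,\ldots,m$ the function $g_j$ is an $s$-connector for the tuple $(f_{1j},\ldots,f_{sj})$, and $$I_B(\{g_1,\ldots,g_m\})\le\max\{I_B(F_1),\ldots,I_B(F_s)\}.$$
   Context: Let $k\ge 2$ be an integer and $E_k=\{0,1,\ldots,k-1\}$. $P_k(n)$ denotes the set of all functions $E_k^n\to E_k$, and $P_k=\bigcup_n P_k(n)$. Tuples are ordered componentwise. A function $f$ is monotone if $\tilde\alpha\le\tilde\beta$ implies $f(\tilde\alpha)\le f(\tilde\beta)$; $M$ is the set of all monotone functions in $P_k$ (of all arities, including constants). A basis is a set $B=M\cup\{\omega_1,\ldots,\omega_p\}$ with $p\ge1$ and $\omega_i\in P_k\setminus M$. A circuit over $B$ with inputs $x_1,\ldots,x_n$ is a finite directed acyclic graph whose source nodes are labelled by the variables $x_1,\ldots,x_n$ and each of whose other nodes (gates) is labelled by a $q$-ary function from $B$ and has $q$ ordered incoming edges; each node computes a function of $P_k(n)$ in the obvious way. A circuit realizes a system $F$ of functions of $x_1,\ldots,x_n$ if every function of $F$ is computed at some node. Gates labelled by functions of $M$ have weight $0$, gates labelled by some $\omega_i$ have weight $1$. The non-monotone complexity $I_B(S)$ of a circuit $S$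 is the sum of the weights of its gates; $I_B(F)$ is the minimum of $I_B(S)$ over all circuits $S$ over $B$ realizing $F$. For functions $f_1,\ldots,f_s\in P_k(n)$, an $s$-connector for the tuple $(f_1,\ldots,f_s)$ is a function $g(z_1,\ldots,z_s,x_1,\ldots,x_n)\in P_k(s+n)$ such that for each $i=1,\ldots,s$ and all $(x_1,\ldots,x_n)\in E_k^n$, $g(\tilde e_i,x_1,\ldots,x_n)=f_i(x_1,\ldots,x_n)$, where $\tilde e_i\in E_k^s$ is the tuple with $1$ in position $i$ and $0$ elsewhere. *)

From mathcomp Require Import all_boot.
Set Implicit Arguments. Unset Strict Implicit. Unset Printing Implicit Defensive.

(* E_k = 'I_k ; a function of P_k(n) is a map ('I_n -> 'I_k) -> 'I_k
   (tuples in E_k^n are represented as maps 'I_n -> 'I_k). *)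
Definition fn (k n : nat) := ('I_n -> 'I_k) -> 'I_k.

Definition monotone (k q : nat) (h : fn k q) : Prop :=
  forall a b : 'I_q -> 'I_k, (forall j, a j <= b j) -> h a <= h b.

(* A gate over the basis B = M ∪ {w} (w of arity qw), placed in a circuit
   that already has m nodes; its ordered inputs are indices of earlier nodes. *)
Inductive gate (k qw m : nat) : Type :=
| MonGate (q : nat) (h : fn k q) of monotone h & ('I_q -> 'I_m)
| OmegaGate of ('I_qw -> 'I_m).

(* A circuit with inputs x_1..x_n and N nodes in total (the n source nodes
   come first, then the gates in a topological order). *)
Inductive circuit (k qw n : nat) : nat -> Type :=
| Inputs : circuit k qw n n
| AddGate (m : nat) of circuit k qw n m & gate k qw m : circuit k qw n m.+1.

Definition gate_val (k qw m : nat) (w : fn k qw) (g : gate k qw m)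
  (v : 'I_m -> 'I_k) : 'I_k :=
  match g with
  | MonGate q h _ a => h (fun j => v (a j))
  | OmegaGate a => w (fun j => v (a j))
  end.

Fixpoint eval (k qw n : nat) (w : fn k qw) (N : nat) (c : circuit k qw n N)
  : ('I_n -> 'I_k) -> 'I_N -> 'I_k :=
  match c in circuit _ _ _ N return ('I_n -> 'I_k) -> 'I_N -> 'I_k with
  | Inputs => fun x => x
  | AddGate m c' g => fun x i =>
      match unlift ord_max i with
      | Some j => eval w c' x j
      | None => gate_val w g (eval w c' x)
      end
  end.

Fixpoint cost (k qw n : nat) (N : nat) (c : circuit k qw n N) : nat :=
  match c with
  | Inputs => 0
  | AddGate _ c' g => cost c' + (if g is OmegaGate _ then 1 else 0)
  end.

Definition computes (k qw n : nat) (w : fn k qw) (N : nat)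
  (c : circuit k qw n N) (f : fn k n) : Prop :=
  exists i : 'I_N, forall x, eval w c x i = f x.

Definition realizes (k qw n : nat) (w : fn k qw) (N : nat)
  (c : circuit k qw n N) (mF : nat) (F : 'I_mF -> fn k n) : Prop :=
  forall j, computes w c (F j).

(* "I_B(F) <= c", where I_B(F) is the minimum of I_B(S) over circuits S
   over B = M ∪ {w} realizing F (and +oo if there is none). *)
Definition IB_le (k qw n : nat) (w : fn k qw) (mF : nat)
  (F : 'I_mF -> fn k n) (c : nat) : Prop :=
  exists (N : nat) (S : circuit k qw n N), realizes w S F /\ cost S <= c.

(* g(z_1..z_s, x_1..x_n) is an s-connector for (F 1, ..., F s):
   g(e_i, x) = F_i(x).  Inputs of g are indexed by 'I_(s+n); the first s
   are the z's (lshift), the last n the x's (rshift). *)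
Definition connector (k s n : nat) (F : 'I_s -> fn k n) (g : fn k (s + n))
  : Prop :=
  forall (i : 'I_s) (x : 'I_n -> 'I_k) (y : 'I_(s + n) -> 'I_k),
    (forall a : 'I_s, nat_of_ord (y (lshift n a)) = nat_of_bool (a == i)) ->
    (forall b : 'I_n, y (rshift s b) = x b) ->
    g y = F i x.

(* Run circuits S_1, ..., S_s for F_1, ..., F_s in parallel, sharing their
   ω-gates.  Once the outputs of the ω-gates are treated as extra inputs,
   every node of S_i is a monotone function of x and of those outputs, and so
   is the selector  z |-> max { h_i | z_i > 0 }  of such functions.  The t-th
   shared ω-gate therefore gets as its p-th argument a single monotone gate
   selecting the p-th argument of the t-th ω-gate of S_i, computed from x and
   the earlier shared ω-gates; the outputs are selected in the same way.  On
   z = e_i everything agrees with S_i, so the new circuit realizes connectors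
   with max_i I_B(F_i) ω-gates. *)

From mathcomp Require Import all_boot zify.
From Stdlib Require Import Classical FunctionalExtensionality Wf_nat.
Set Implicit Arguments. Unset Strict Implicit. Unset Printing Implicit Defensive.

Section OracleEval.
Variables (k qw : nat) (w : fn k qw) (d : 'I_k) (n : nat).

(* [eval_oracle c x o] evaluates [c] with the output of its [t]-th ω-gate
   (in topological order) replaced by [o t]; only monotone gates remain. *)
Fixpoint eval_oracle N (c : circuit k qw n N) (x : 'I_n -> 'I_k)
  (o : nat -> 'I_k) : 'I_N -> 'I_k :=
  match c in circuit _ _ _ N return 'I_N -> 'I_k with
  | Inputs => x
  | AddGate m c' g => fun i =>
     match unlift ord_max i with
     | Some j => eval_oracle c' x o j
     | None => match g with
               | MonGate q h _ a => h (fun j => eval_oracle c' x o (a j))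
               | OmegaGate _ => o (cost c')
               end
     end
  end.

Lemma eval_oracle_mono N (c : circuit k qw n N) (x x' : 'I_n -> 'I_k)
  (o o' : nat -> 'I_k) :
  (forall b, x b <= x' b) -> (forall t, o t <= o' t) ->
  forall i, eval_oracle c x o i <= eval_oracle c x' o' i.
Proof.
move=> Hx Ho; elim: c => [|m c IH g] i /=; first exact: Hx.
case: (unlift ord_max i) => [j|]; first exact: IH.
by case: g => [q h h_mono a|a] //; apply: h_mono.
Qed.

Lemma eq_eval_oracle N (c : circuit k qw n N) x o o' :
  (forall t, t < cost c -> o t = o' t) ->
  forall i, eval_oracle c x o i = eval_oracle c x o' i.
Proof.
elim: c => [|m c IH g] Ho i //=.
have Ho' t : t < cost c -> o t = o' t.
  by move=> Ht; apply: Ho; apply: leq_trans Ht (leq_addr _ _).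
case: (unlift ord_max i) => [j|]; first exact: IH.
case: g Ho => [q h h_mono a|a] Ho.
  by congr h; apply: functional_extensionality => j; apply: IH.
by apply: Ho; rewrite /= addn1.
Qed.

Fixpoint omega_out N (c : circuit k qw n N) (x : 'I_n -> 'I_k) : nat -> 'I_k :=
  match c with
  | Inputs => fun _ => d
  | AddGate m c' g => fun t =>
      if t < cost c' then omega_out c' x t else
      if g is OmegaGate a then w (fun p => eval w c' x (a p)) else d
  end.

Lemma eval_oracleE N (c : circuit k qw n N) x i :
  eval w c x i = eval_oracle c x (omega_out c x) i.
Proof.
elim: c i => [|m c IH g] i //=.
have E j : eval_oracle c x (omega_out c x) j =
    eval_oracle c x (fun t => if t < cost c then omega_out c x t else
      if g is OmegaGate a then w (fun p => eval w c x (a p)) else d) j.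
  by apply: eq_eval_oracle => t ->.
case: (unlift ord_max i) => [j|]; first by rewrite IH E.
case: g E => [q h h_mono a|a] E /=; last by rewrite ltnn.
by congr h; apply: functional_extensionality => j; rewrite IH E.
Qed.

Fixpoint omega_arg N (c : circuit k qw n N) (t : nat) (p : 'I_qw)
  (x : 'I_n -> 'I_k) (o : nat -> 'I_k) : 'I_k :=
  match c with
  | Inputs => d
  | AddGate m c' g =>
      if t < cost c' then omega_arg c' t p x o else
      if g is OmegaGate a then eval_oracle c' x o (a p) else d
  end.

Lemma omega_arg_mono N (c : circuit k qw n N) t p (x x' : 'I_n -> 'I_k)
  (o o' : nat -> 'I_k) :
  (forall b, x b <= x' b) -> (forall t, o t <= o' t) ->
  omega_arg c t p x o <= omega_arg c t p x' o'.
Proof.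
move=> Hx Ho; elim: c => [|m c IH g] //=.
by case: ifP => // _; case: g => // a; apply: eval_oracle_mono.
Qed.

Lemma eq_omega_arg N (c : circuit k qw n N) t p x o o' :
  (forall t', t' < t -> o t' = o' t') ->
  omega_arg c t p x o = omega_arg c t p x o'.
Proof.
move=> Ho; elim: c => [|m c IH g] //=.
case: ifP => // Ht; case: g => // a; apply: eq_eval_oracle => t' Ht'.
by apply: Ho; apply: leq_trans Ht' _; rewrite leqNgt Ht.
Qed.

Lemma omega_outE N (c : circuit k qw n N) x t : t < cost c ->
  omega_out c x t = w (fun p => omega_arg c t p x (omega_out c x)).
Proof.
elim: c => [|m c IH g] //= Ht.
case: ifP => Htc.
  rewrite IH //; congr w; apply: functional_extensionality => p.
  by apply: eq_omega_arg => t' Ht'; rewrite (ltn_trans Ht' Htc).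
case: g Ht => [q h h_mono a|a] Ht; first by rewrite addn0 Htc in Ht.
congr w; apply: functional_extensionality => p.
by rewrite eval_oracleE; apply: eq_eval_oracle => t' ->.
Qed.

End OracleEval.

Section StraightLine.
Variables (k qw : nat) (w : fn k qw) (d : 'I_k).

Definition nat_monotone (h : (nat -> 'I_k) -> 'I_k) :=
  forall V V' : nat -> 'I_k, (forall j, V j <= V' j) -> h V <= h V'.

Inductive instr :=
| MonInstr (h : (nat -> 'I_k) -> 'I_k) of nat_monotone h
| OmegaInstr of ('I_qw -> nat).

Definition is_omega (ins : instr) : bool :=
  if ins is OmegaInstr _ then true else false.

Definition instr_val (ins : instr) (V : nat -> 'I_k) : 'I_k :=
  match ins with
  | MonInstr h _ => h V
  | OmegaInstr a => w (fun p => V (a p))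
  end.

Definition pad M (v : 'I_M -> 'I_k) (j : nat) : 'I_k := oapp v d (insub j).

Definition trunc M (V : nat -> 'I_k) (j : nat) : 'I_k :=
  if j < M then V j else d.

Lemma padE M (v : 'I_M -> 'I_k) (j : 'I_M) : pad v j = v j.
Proof. by rewrite /pad valK. Qed.

Lemma pad_out M (v : 'I_M -> 'I_k) j : M <= j -> pad v j = d.
Proof. by move=> Hj; rewrite /pad insubN // -leqNgt. Qed.

Lemma pad_mono M (v v' : 'I_M -> 'I_k) :
  (forall i, v i <= v' i) -> forall j, pad v j <= pad v' j.
Proof. by move=> Hv j; rewrite /pad; case: insubP => //= o. Qed.

Definition gate_of_instr M (HM : 0 < M) (ins : instr) : gate k qw M :=
  match ins with
  | MonInstr h h_mono =>
      @MonGate k qw M M (fun v => h (pad v))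
        (fun _ _ Hv => h_mono _ _ (pad_mono Hv)) id
  | OmegaInstr a => OmegaGate k (fun p => insubd (Ordinal HM) (a p))
  end.

Lemma gate_of_instrE M (HM : 0 < M) ins v :
  (forall a p, ins = OmegaInstr a -> a p < M) ->
  gate_val w (gate_of_instr HM ins) v = instr_val ins (pad v).
Proof.
case: ins => [h h_mono|a] Ha //=.
congr w; apply: functional_extensionality => p.
by rewrite /pad /insubd; case: insubP => //=; rewrite Ha.
Qed.

Lemma pad_eval_AddGate n' M (c : circuit k qw n' M) g y j :
  pad (eval w (AddGate c g) y) j =
  if j < M then pad (eval w c y) j
  else if j == M then gate_val w g (eval w c y) else d.
Proof.
case: ltngtP => Hj.
- have HjS : j < M.+1 by apply: ltnW.
  rewrite -[j]/(val (Ordinal HjS)) padE /=.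
  case: unliftP => [j'|] E; last first.
    by move: (congr1 val E) => /= Ej; rewrite Ej ltnn in Hj.
  have -> : j = j' by move: (congr1 val E) => /= ->; rewrite /bump leqNgt ltn_ord.
  by rewrite padE.
- by rewrite pad_out.
- by subst j; rewrite -[M]/(val (@ord_max M)) padE /= unlift_none.
Qed.

Variables (n' : nat) (Hn' : 0 < n') (prog : seq instr).

Definition instr0 : instr := OmegaInstr (fun _ => 0).

Lemma build_gt0 N : 0 < N + n'.
Proof. by rewrite addn_gt0 Hn' orbT. Qed.

Fixpoint build (N : nat) : circuit k qw n' (N + n') :=
  match N with
  | 0 => Inputs k qw n'
  | N1.+1 =>
      AddGate (build N1) (gate_of_instr (build_gt0 N1) (nth instr0 prog N1))
  end.

Lemma pad_build_input N y (b : 'I_n') : pad (eval w (build N) y) b = y b.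
Proof.
elim: N => [|N IH] /=; first by rewrite padE.
by rewrite pad_eval_AddGate ifT //; apply: leq_trans (ltn_ord b) (leq_addl _ _).
Qed.

Lemma pad_build_prefix N1 N2 y j : N1 <= N2 -> j < N1 + n' ->
  pad (eval w (build N2) y) j = pad (eval w (build N1) y) j.
Proof.
move=> H12 Hj; elim: N2 H12 => [|N2 IH]; first by rewrite leqn0 => /eqP ->.
rewrite leq_eqVlt ltnS => /predU1P[-> //|H].
rewrite /= pad_eval_AddGate ifT ?IH //.
by apply: leq_trans Hj _; rewrite leq_add2r.
Qed.

Lemma cost_build N :
  N <= size prog -> cost (build N) = count is_omega (take N prog).
Proof.
elim: N => [|N IH] H /=; first by rewrite take0.
rewrite IH ?(ltnW H) // (take_nth instr0 H) -cats1 count_cat /=.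
by case: (nth instr0 prog N).
Qed.

Definition run y := pad (eval w (build (size prog)) y).

Lemma run_input y (b : 'I_n') : run y b = y b.
Proof. exact: pad_build_input. Qed.

Lemma pad_build_trunc N y : N <= size prog ->
  pad (eval w (build N) y) = trunc (N + n') (run y).
Proof.
move=> HN; apply: functional_extensionality => j; rewrite /trunc.
case: ltnP => Hj; last exact: pad_out.
by rewrite /run (pad_build_prefix _ HN).
Qed.

Lemma run_step N y : N < size prog ->
  (forall a p, nth instr0 prog N = OmegaInstr a -> a p < N + n') ->
  run y (N + n') = instr_val (nth instr0 prog N) (trunc (N + n') (run y)).
Proof.
move=> HN Ha; rewrite {1}/run (@pad_build_prefix N.+1) //.
rewrite [build N.+1]/= pad_eval_AddGate ltnn eqxx gate_of_instrE //.
by rewrite pad_build_trunc // ltnW.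
Qed.

Lemma cost_run_circuit : cost (build (size prog)) = count is_omega prog.
Proof. by rewrite cost_build // take_size. Qed.

End StraightLine.

Arguments MonInstr {k qw h}.
Arguments OmegaInstr {k qw}.
Arguments instr0 {k qw}.

Section SharedOmegaGates.
Variables (k qw : nat) (w : fn k qw) (d : 'I_k) (s n m C : nat).
Variables (Ni : 'I_s -> nat) (S : forall i, circuit k qw n (Ni i)).
Variable node : forall i, 'I_m -> 'I_(Ni i).

(* Node layout: z at [0, s), x at [s, s + n), then for each t < C the q
   arguments and the output of the t-th shared ω-gate, then the m outputs. *)
Definition inputs_of (V : nat -> 'I_k) (b : 'I_n) : 'I_k := V (s + b).

Definition omega_node t := t * qw.+1 + qw + (s + n).

Definition omega_vals t (V : nat -> 'I_k) (t' : nat) : 'I_k :=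
  if t' < t then V (omega_node t') else d.

Definition select t (G : 'I_s -> ('I_n -> 'I_k) -> (nat -> 'I_k) -> 'I_k)
  (V : nat -> 'I_k) : 'I_k :=
  insubd d (\max_(i < s | 0 < V i) G i (inputs_of V) (omega_vals t V)).

Lemma select_mono t (G : 'I_s -> ('I_n -> 'I_k) -> (nat -> 'I_k) -> 'I_k) :
  (forall i (x x' : 'I_n -> 'I_k) (o o' : nat -> 'I_k),
     (forall b, x b <= x' b) -> (forall t, o t <= o' t) ->
     G i x o <= G i x' o') ->
  nat_monotone (select t G).
Proof.
move=> G_mono V V' HV.
have max_lt (U : nat -> 'I_k) :
    \max_(i < s | 0 < U i) G i (inputs_of U) (omega_vals t U) < k.
  elim/big_ind: _ => // [|a b Ha Hb]; last by rewrite gtn_max Ha Hb.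
  exact: leq_ltn_trans (leq0n d) (ltn_ord d).
rewrite /select !val_insubd !max_lt; apply/bigmax_leqP => i Vi.
apply: leq_trans (leq_bigmax_cond i (leq_trans Vi (HV i))).
by apply: G_mono => [b|t']; [apply: HV | rewrite /omega_vals; case: ifP].
Qed.

Lemma select_unit t G (V : nat -> 'I_k) (i : 'I_s) :
  (forall a : 'I_s, nat_of_ord (V a) = (a == i)) ->
  select t G V = G i (inputs_of V) (omega_vals t V).
Proof.
move=> Hz; rewrite /select (bigD1 i) ?Hz ?eqxx //= big1 ?maxn0 ?valKd //.
by move=> a; rewrite Hz; case: eqP.
Qed.

Lemma select_trunc t G (V : nat -> 'I_k) M : t * qw.+1 + (s + n) <= M ->
  select t G (trunc d M V) = select t G V.
Proof.
move=> HM; have E j : j < M -> trunc d M V j = V j by rewrite /trunc => ->.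
rewrite /select.
have -> : inputs_of (trunc d M V) = inputs_of V.
  by apply: functional_extensionality => b; apply: E; have := ltn_ord b; lia.
have -> : omega_vals t (trunc d M V) = omega_vals t V.
  apply: functional_extensionality => t'; rewrite /omega_vals.
  by case: ifP => // Ht; apply: E; rewrite /omega_node; nia.
by congr insubd; apply: eq_bigl => i; rewrite E //; have := ltn_ord i; lia.
Qed.

Definition arg_gate t (p : 'I_qw) :=
  select t (fun i => omega_arg d (S i) t p).

Definition out_gate (j : 'I_m) :=
  select C (fun i x o => eval_oracle (S i) x o (node i j)).

Lemma arg_gate_mono t p : nat_monotone (arg_gate t p).
Proof. by apply: select_mono => i *; apply: omega_arg_mono. Qed.

Lemma out_gate_mono j : nat_monotone (out_gate j).
Proof. by apply: select_mono => i *; apply: eval_oracle_mono. Qed.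

Definition stage t : seq (instr k qw) :=
  [seq MonInstr (arg_gate_mono t p) | p <- enum 'I_qw] ++
  [:: OmegaInstr (fun p : 'I_qw => t * qw.+1 + p + (s + n))].

Definition shared_prog : seq (instr k qw) :=
  flatten [seq stage t | t <- iota 0 C] ++
  [seq MonInstr (out_gate_mono j) | j <- enum 'I_m].

Lemma size_stage t : size (stage t) = qw.+1.
Proof. by rewrite size_cat size_map size_enum_ord addn1. Qed.

Lemma size_stages ts : size (flatten [seq stage t | t <- ts]) = size ts * qw.+1.
Proof. by elim: ts => //= t ts IH; rewrite size_cat IH size_stage mulSn. Qed.

Lemma count_omega_stages ts :
  count (@is_omega k qw) (flatten [seq stage t | t <- ts]) = size ts.
Proof.
elim: ts => //= t ts IH; rewrite !count_cat IH count_map /=.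
by rewrite (eq_count (a2 := pred0)) // count_pred0.
Qed.

Lemma nth_stages ts t p : t < size ts -> p < qw.+1 ->
  nth instr0 (flatten [seq stage t | t <- ts]) (t * qw.+1 + p) =
  nth instr0 (stage (nth 0 ts t)) p.
Proof.
elim: ts t => // t0 ts IH [|t] Ht Hp /=; rewrite nth_cat size_stage.
  by rewrite mul0n add0n Hp.
by rewrite mulSn -addnA ltnNge leq_addr /= addKn; apply: IH.
Qed.

Lemma size_shared_prog : size shared_prog = C * qw.+1 + m.
Proof. by rewrite size_cat size_stages size_iota size_map size_enum_ord. Qed.

Lemma count_omega_shared_prog : count (@is_omega k qw) shared_prog = C.
Proof.
rewrite count_cat count_omega_stages size_iota count_map.
by rewrite (eq_count (a2 := pred0)) // count_pred0 addn0.
Qed.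

Lemma nth_shared_prog_arg t (p : 'I_qw) : t < C ->
  nth instr0 shared_prog (t * qw.+1 + p) = MonInstr (arg_gate_mono t p).
Proof.
move=> Ht; have Hp := ltn_ord p.
rewrite nth_cat size_stages size_iota ifT; last by nia.
rewrite nth_stages ?size_iota ?nth_iota ?add0n //; last exact: ltnW.
rewrite nth_cat size_map size_enum_ord ltn_ord.
by rewrite (nth_map p) ?size_enum_ord // nth_ord_enum.
Qed.

Lemma nth_shared_prog_omega t : t < C ->
  nth instr0 shared_prog (t * qw.+1 + qw) =
  OmegaInstr (fun p : 'I_qw => t * qw.+1 + p + (s + n)).
Proof.
move=> Ht; rewrite nth_cat size_stages size_iota ifT; last by nia.
rewrite nth_stages ?size_iota ?nth_iota // add0n nth_cat size_map size_enum_ord.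
by rewrite ltnn subnn.
Qed.

Lemma nth_shared_prog_out (j : 'I_m) :
  nth instr0 shared_prog (C * qw.+1 + j) = MonInstr (out_gate_mono j).
Proof.
rewrite nth_cat size_stages size_iota ltnNge leq_addr /= addKn.
by rewrite (nth_map j) ?size_enum_ord // nth_ord_enum.
Qed.

Hypothesis Hsn : 0 < s + n.

Definition shared_run := run w d Hsn shared_prog.

Variables (y : 'I_(s + n) -> 'I_k) (i : 'I_s) (x : 'I_n -> 'I_k).
Hypothesis Hz : forall a : 'I_s, nat_of_ord (y (lshift n a)) = (a == i).
Hypothesis Hx : forall b : 'I_n, y (rshift s b) = x b.
Hypothesis Hcost : forall i, cost (S i) <= C.

Lemma shared_run_unit (a : 'I_s) : nat_of_ord (shared_run y a) = (a == i).
Proof.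
by rewrite -Hz /shared_run -[nat_of_ord a]/(nat_of_ord (lshift n a)) run_input.
Qed.

Lemma inputs_of_shared_run : inputs_of (shared_run y) = x.
Proof.
apply: functional_extensionality => b.
by rewrite -Hx /inputs_of /shared_run -[s + b]/(nat_of_ord (rshift s b)) run_input.
Qed.

Lemma shared_run_omega t : t < cost (S i) ->
  shared_run y (omega_node t) = omega_out w d (S i) x t.
Proof.
elim/ltn_ind: t => t IH Htc; have HtC := leq_trans Htc (Hcost i).
have Hsize := size_shared_prog.
rewrite /omega_node /shared_run run_step ?nth_shared_prog_omega //; first last.
- by move=> a p [<-]; have := ltn_ord p; lia.
- by rewrite Hsize; nia.
rewrite (omega_outE _ _ _ Htc) /=; congr w; apply: functional_extensionality => p.
have Hp := ltn_ord p.
rewrite /trunc ifT; last by lia.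
rewrite run_step ?nth_shared_prog_arg //=; last by rewrite Hsize; nia.
rewrite /arg_gate select_trunc; last by rewrite leq_add2r leq_addr.
rewrite -[run _ _ _ _ _]/(shared_run y) (select_unit _ _ shared_run_unit).
rewrite inputs_of_shared_run; apply: eq_omega_arg => t' Ht'.
by rewrite /omega_vals Ht' IH // (ltn_trans Ht' Htc).
Qed.

Lemma shared_run_out (j : 'I_m) :
  shared_run y (C * qw.+1 + j + (s + n)) = eval w (S i) x (node i j).
Proof.
have Hj := ltn_ord j.
rewrite /shared_run run_step ?nth_shared_prog_out //=; last first.
  by rewrite size_shared_prog; lia.
rewrite /out_gate select_trunc; last by lia.
rewrite -[run _ _ _ _ _]/(shared_run y) (select_unit _ _ shared_run_unit).
rewrite inputs_of_shared_run (eval_oracleE w d); apply: eq_eval_oracle => t Ht.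
by rewrite /omega_vals (leq_trans Ht (Hcost i)) shared_run_omega.
Qed.

End SharedOmegaGates.

Lemma shared_omega_connectors (k qw : nat) (w : fn k qw) (hk : 0 < k)
  (s m n C : nat) (hs : 0 < s) (F : 'I_s -> 'I_m -> fn k n) :
  (forall i, IB_le w (F i) C) ->
  exists g : 'I_m -> fn k (s + n),
    (forall j, connector (fun i => F i j) (g j)) /\ IB_le w g C.
Proof.
move=> HF; pose d : 'I_k := Ordinal hk.
have hsn : 0 < s + n by rewrite addn_gt0 hs.
have /fin_all_exists[NS HS] i : exists NS : {N & circuit k qw n N},
    realizes w (projT2 NS) (F i) /\ cost (projT2 NS) <= C.
  by have [N [Si HSi]] := HF i; exists (existT _ N Si).
pose S i := projT2 (NS i).
have /fin_all_exists[node Hnode] i : exists nd : 'I_m -> 'I_(projT1 (NS i)),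
    forall j x, eval w (S i) x (nd j) = F i j x.
  by case: (HS i) => /fin_all_exists.
pose g (j : 'I_m) (y : 'I_(s + n) -> 'I_k) :=
  shared_run w d C S node hsn y (C * qw.+1 + j + (s + n)).
exists g; split.
  have Hcost i : cost (S i) <= C by case: (HS i).
  by move=> j i x y Hz Hx; rewrite /g (shared_run_out _ _ _ _ Hz Hx Hcost) Hnode.
exists _, (build d hsn (shared_prog d C S node) (size (shared_prog d C S node))).
split; last by rewrite cost_run_circuit count_omega_shared_prog.
move=> j.
have Hj : C * qw.+1 + j + (s + n) < size (shared_prog d C S node) + (s + n).
  by rewrite size_shared_prog; have := ltn_ord j; lia.
by exists (Ordinal Hj) => y; rewrite /g /shared_run /run -(padE d).
Qed.

Definition unit_connector (k s n : nat) (i0 : 'I_s) (F : 'I_s -> fn k n) :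
  fn k (s + n) := fun y =>
  F (odflt i0 [pick i | [forall a, nat_of_ord (y (lshift n a)) == (a == i)]])
    (fun b => y (rshift s b)).

Lemma unit_connectorP (k s n : nat) (i0 : 'I_s) (F : 'I_s -> fn k n) :
  connector F (unit_connector i0 F).
Proof.
move=> i x y Hz Hx; rewrite /unit_connector.
have -> : (fun b => y (rshift s b)) = x by apply: functional_extensionality.
case: pickP => [i' /forallP /(_ i) /eqP /= | /(_ i) /forallP[] a].
  by rewrite Hz eqxx; case: eqP => // ->.
by rewrite Hz.
Qed.

Theorem lemma2 (k qw : nat) (w : fn k qw) (hk : 2 <= k) (hqw : 1 <= qw)
  (hw : ~ monotone w) (s m n : nat) (hs : 1 <= s) (hm : 1 <= m) (hn : 1 <= n)
  (f : 'I_s -> 'I_m -> fn k n) :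
  exists g : 'I_m -> fn k (s + n),
    (forall j : 'I_m, connector (fun i => f i j) (g j)) /\
    (forall c : nat, (forall i : 'I_s, IB_le w (f i) c) -> IB_le w g c).
Proof.
(* [g] is fixed before [c]: build it from the least [c] that works for all
   [f i]. *)
case: (classic (exists c, forall i, IB_le w (f i) c)) => [Hex | Hnone]; last first.
  exists (fun j => unit_connector (Ordinal hs) (fun i => f i j)).
  split=> [j | c Hc]; first exact: unit_connectorP.
  by case: Hnone; exists c.
have [c0 [[Hc0 Hmin] _]] :=
  dec_inh_nat_subset_has_unique_least_element _ (fun c => classic _) Hex.
have [g [Hg [N [S [HS Hcost]]]]] := shared_omega_connectors (ltnW hk) hs Hc0.
exists g; split=> // c Hc; exists N, S; split=> //.
by apply: leq_trans Hcost _; apply/leP; apply: Hmin.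
Qed.
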